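(* Let $T$ be the monad on $\mathsf{Set}$ generated by an algebraic theory (a signature of operation symbols with finite arities together with a set of equations) none of whose equations is a drop equation. Then the underlying functor of $T$ preserves pullbacks of monomorphisms (in particular it preserves monomorphisms). Consequently, if $\rho$ is an uncountable regular ordinal, then $T$ preserves $\rho^{\mathrm{op}}$-indexed limits, i.e. for every functor $X:\rho^{\mathrm{op}}\to\mathsf{Set}$ the canonical map $T(\lim X) \to \lim T(X)$ is a bijection.
   Context: A signature is a set $\Sigma$ of operation symbols, each with an arity $n \in \mathbb{N}$. For a set $X$, the set $\mathsf{Tm}(X)$ of terms is defined inductively: each $x\in X$ is a term, and if $\mathsf{op}\in\Sigma$ has arity $n$ and $t_1,\dots,t_n \in \mathsf{Tm}(X)$ then $\mathsf{op}(t_1,\dots,t_n) \in \mathsf{Tm}(X)$. An equation is a pair $(t,s)$ of terms in some $\mathsf{Tm}(X)$; an algebraic theory is a signature with a set of equations. The generated monad is $T(X) = \mathsf{Tm}(X)/\sim$, where $\sim$ is the smallest congruence on $\mathsf{Tm}(X)$ containing all substitution instances of the equations; $T$ acts on maps by substituting variables. An equation $(t,s)$ is a drop equation if the sets of free variables of $t$ and $s$ differ. $T$ preserves pullbacks of monomorphisms if it maps every pullback square in $\mathsf{Set}$ one of whose legs is a monomorphism (specifically, pullbacks of an inclusion $Z \subseteq Y$ along any map $f: X\to Y$) to a pullback square. An ordinal $\rho$ is regular if it is a limit ordinal equal to its own cofinality. *)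

From Stdlib Require Vectors.Fin.


Record signature := Signature { op : Type ; arity : op -> nat }.

Inductive Tm (S : signature) (X : Type) : Type :=
| var : X -> Tm S X
| app : forall o : op S, (Fin.t (arity S o) -> Tm S X) -> Tm S X.
Arguments var {S X} _.
Arguments app {S X} _ _.

Fixpoint subst (S : signature) (X Y : Type) (sg : X -> Tm S Y) (t : Tm S X)
  : Tm S Y :=
  match t with
  | var x => sg x
  | app o ts => app o (fun i => subst S X Y sg (ts i))
  end.

Arguments subst {S X Y} sg t.

Definition Tm_map (S : signature) (X Y : Type) (f : X -> Y) (t : Tm S X)
  : Tm S Y := subst (fun x => var (f x)) t.
Arguments Tm_map {S X Y} f t.

Fixpoint occurs (S : signature) (X : Type) (x : X) (t : Tm S X) : Prop :=
  match t with
  | var y => y = x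
  | app o ts => exists i, occurs S X x (ts i)
  end.
Arguments occurs {S X} x t.

Record theory := Theory {
  sig : signature ;
  eqn : Type ;
  evars : eqn -> Type ;
  lhs : forall e, Tm sig (evars e) ;
  rhs : forall e, Tm sig (evars e) }.

Definition drop_equation (Th : theory) (e : eqn Th) : Prop :=
  ~ (forall x : evars Th e, occurs x (lhs Th e) <-> occurs x (rhs Th e)).

Inductive teq (Th : theory) (X : Type) : Tm (sig Th) X -> Tm (sig Th) X -> Prop :=
| teq_ax : forall e (sg : evars Th e -> Tm (sig Th) X),
    teq Th X (subst sg (lhs Th e)) (subst sg (rhs Th e))
| teq_refl : forall t, teq Th X t t
| teq_sym : forall t s, teq Th X t s -> teq Th X s t
| teq_trans : forall t s u, teq Th X t s -> teq Th X s u -> teq Th X t u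
| teq_cong : forall o (ts ss : Fin.t (arity (sig Th) o) -> Tm (sig Th) X),
    (forall i, teq Th X (ts i) (ss i)) -> teq Th X (app o ts) (app o ss).

Arguments teq Th {X} t s.

(** T(X) = Tm(X)/teq. We work with representatives: two terms denote the
    same element of T(X) iff they are [teq]-related, and T(f) is induced
    by [Tm_map f]. *)

(** The pullback is P = {x | Z (f x)} with legs the inclusion P -> X and
    the restriction P -> {y | Z y} of f. Preservation means the canonical
    map T(P) -> T(X) x_{T(Y)} T(Z) is a bijection. *)
Definition preserves_pullbacks_of_monos (Th : theory) : Prop :=
  forall (X Y : Type) (Z : Y -> Prop) (f : X -> Y),
  let P := { x : X | Z (f x) } in
  let pX : P -> X := fun p => proj1_sig p in
  let pZ : P -> { y : Y | Z y } := fun p => exist Z (f (proj1_sig p)) (proj2_sig p) in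
  let iZ : { y : Y | Z y } -> Y := fun z => proj1_sig z in
  (forall p q : Tm (sig Th) P,
      teq Th (Tm_map pX p) (Tm_map pX q) ->
      teq Th (Tm_map pZ p) (Tm_map pZ q) ->
      teq Th p q) /\
  (forall (u : Tm (sig Th) X) (v : Tm (sig Th) { y : Y | Z y }),
      teq Th (Tm_map f u) (Tm_map iZ v) ->
      exists p : Tm (sig Th) P,
        teq Th (Tm_map pX p) u /\ teq Th (Tm_map pZ p) v).

Definition preserves_monos (Th : theory) : Prop :=
  forall (X Y : Type) (f : X -> Y),
  (forall x x', f x = f x' -> x = x') ->
  forall t s : Tm (sig Th) X,
    teq Th (Tm_map f t) (Tm_map f s) -> teq Th t s.

(** Ordinals, presented as strict well-orders (O, lt). *)
Definition is_well_order (O : Type) (lt : O -> O -> Prop) : Prop :=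
  well_founded lt /\
  (forall a b c, lt a b -> lt b c -> lt a c) /\
  (forall a b, lt a b \/ a = b \/ lt b a).

Definition ole (O : Type) (lt : O -> O -> Prop) (a b : O) : Prop :=
  lt a b \/ a = b.
Arguments ole {O} lt a b.

Arguments is_well_order {O} lt.

Definition is_limit (O : Type) (lt : O -> O -> Prop) : Prop :=
  (exists a : O, True) /\ (forall a, exists b, lt a b).

Arguments is_limit {O} lt.

Definition cofinal (O : Type) (lt : O -> O -> Prop) (C : O -> Prop) : Prop :=
  forall a, exists c, C c /\ ole lt a c.

Arguments cofinal {O} lt C.

Definition order_iso_sub (O : Type) (lt : O -> O -> Prop) (C : O -> Prop) : Prop :=
  exists f : { c : O | C c } -> O,
    (forall x y, f x = f y -> x = y) /\
    (forall b, exists x, f x = b) /\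
    (forall x y, lt (proj1_sig x) (proj1_sig y) <-> lt (f x) (f y)).

Arguments order_iso_sub {O} lt C.

(** rho equals its cofinality: every cofinal subset has order type rho
    (the cofinality being the least order type of a cofinal subset). *)
Definition is_regular (O : Type) (lt : O -> O -> Prop) : Prop :=
  is_well_order lt /\ is_limit lt /\
  forall C : O -> Prop, cofinal lt C -> order_iso_sub lt C.

Arguments is_regular {O} lt.

Definition uncountable (O : Type) : Prop :=
  ~ exists g : O -> nat, forall a b, g a = g b -> a = b.

(** A functor X : rho^op -> Set: sets X a with restriction maps
    r a b : X b -> X a for a <= b. *)
Definition is_op_functor (O : Type) (lt : O -> O -> Prop) (X : O -> Type)
  (r : forall a b, ole lt a b -> X b -> X a) : Prop :=
  (forall a (h : ole lt a a) x, r a a h x = x) /\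
  (forall a b c (hab : ole lt a b) (hbc : ole lt b c) (hac : ole lt a c) x,
      r a b hab (r b c hbc x) = r a c hac x).

Arguments is_op_functor {O lt X} r.

Definition lim (O : Type) (lt : O -> O -> Prop) (X : O -> Type)
  (r : forall a b, ole lt a b -> X b -> X a) : Type :=
  { x : forall a, X a | forall a b (h : ole lt a b), r a b h (x b) = x a }.

Arguments lim {O lt X} r.

(** T preserves the limit of X: the canonical map T(lim X) -> lim T(X),
    t |-> (T(pi_a) t)_a, is a bijection. *)
Definition preserves_limit (Th : theory) (O : Type) (lt : O -> O -> Prop)
  (X : O -> Type) (r : forall a b, ole lt a b -> X b -> X a) : Prop :=
  let pi : forall a, lim r -> X a := fun a x => proj1_sig x a in
  (forall t s : Tm (sig Th) (lim r),
      (forall a, teq Th (Tm_map (pi a) t) (Tm_map (pi a) s)) ->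
      teq Th t s) /\
  (forall u : forall a, Tm (sig Th) (X a),
      (forall a b (h : ole lt a b), teq Th (Tm_map (r a b h) (u b)) (u a)) ->
      exists t : Tm (sig Th) (lim r),
        forall a, teq Th (Tm_map (pi a) t) (u a)).
Arguments preserves_limit Th {O lt X} r.

(* A map g that is injective on the variables of t and s reflects equality of
   T(g)t and T(g)s (substitute a left inverse of g); this gives preservation
   of monos, for any theory, and injectivity of the pullback comparison map.
   Without drop equations, equal terms have the same free variables, so an
   element u of T(X) whose image in T(Y) comes from T(Z) has all its
   variables in the preimage of Z, which gives surjectivity.

   For a limit over rho^op, finitely many elements of lim X are already
   separated at a single stage, which gives injectivity. Given a compatible
   family (u_a) in T(X a), the variables of u_a are the image of those of u_b
   under X(a <= b), so their number is a monotone function rho -> nat; as rho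
   has uncountable cofinality it is eventually constant, say from a0 on. From
   then on the restriction maps are bijections between variable sets, so
   every variable of u_a0 lifts uniquely to a thread in lim X, and u_a0 with
   its variables so lifted is the required element of T(lim X). *)
From Stdlib Require Import Classical ClassicalEpsilon FunctionalExtensionality ProofIrrelevance List Lia.
From Pilot Require Import Defs.

Lemma proj1_sig_inj (A : Type) (Q : A -> Prop) (x y : {a : A | Q a}) :
  proj1_sig x = proj1_sig y -> x = y.
Proof. destruct x, y; simpl; intros ->; apply subset_eq_compat; reflexivity. Qed.

Lemma left_inverse_on (A B C : Type) (P : A -> Prop) (g : A -> B) (k : A -> C) (d : C) :
  (forall x x', P x -> P x' -> g x = g x' -> x = x') ->
  exists h : B -> C, forall x, P x -> h (g x) = k x.
Proof.
  intros g_inj.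
  exists (fun y => match excluded_middle_informative (exists x, P x /\ g x = y) with
           | left H => k (proj1_sig (constructive_indefinite_description _ H))
           | right _ => d end).
  intros x Px. destruct excluded_middle_informative as [H|H].
  - destruct constructive_indefinite_description as [x' [Px' E]]; simpl.
    f_equal; auto.
  - exfalso; eauto.
Qed.

Lemma NoDup_map_injective_on (A B : Type) (f : A -> B) (l : list A) :
  NoDup (map f l) -> forall x y, In x l -> In y l -> f x = f y -> x = y.
Proof.
  induction l as [|a l IH]; simpl; [tauto|]. intro H. inversion H as [|? ? Hn Hd]; subst.
  intros x y [<-|Hx] [<-|Hy] E; auto; exfalso; apply Hn.
  - rewrite E; apply in_map; auto.
  - rewrite <- E; apply in_map; auto.
Qed.

Section Terms.

Variable Sg : signature.

Lemma subst_subst (X Y W : Type) (g : X -> Tm Sg Y) (h : Y -> Tm Sg W) (t : Tm Sg X) :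
  subst h (subst g t) = subst (fun x => subst h (g x)) t.
Proof. induction t; simpl; f_equal; auto using functional_extensionality. Qed.

Lemma subst_var (X : Type) (t : Tm Sg X) : subst var t = t.
Proof. induction t; simpl; f_equal; auto using functional_extensionality. Qed.

Lemma subst_ext_on (X Y : Type) (g h : X -> Tm Sg Y) (t : Tm Sg X) :
  (forall x, occurs x t -> g x = h x) -> subst g t = subst h t.
Proof.
  induction t as [x|o ts IH]; simpl; intro H; auto.
  f_equal; apply functional_extensionality; intro i; apply IH; eauto.
Qed.

Lemma Tm_map_Tm_map (X Y W : Type) (f : X -> Y) (g : Y -> W) (t : Tm Sg X) :
  Tm_map g (Tm_map f t) = Tm_map (fun x => g (f x)) t.
Proof. apply subst_subst. Qed.

Lemma subst_Tm_map (X Y W : Type) (f : X -> Y) (g : Y -> Tm Sg W) (t : Tm Sg X) :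
  subst g (Tm_map f t) = subst (fun x => g (f x)) t.
Proof. apply subst_subst. Qed.

Lemma occurs_subst (X Y : Type) (g : X -> Tm Sg Y) (t : Tm Sg X) (y : Y) :
  occurs y (subst g t) <-> exists x, occurs x t /\ occurs y (g x).
Proof.
  induction t as [x|o ts IH]; simpl.
  - split; [eauto | intros [x' [-> H]]; auto].
  - split.
    + intros [i Hi]; apply IH in Hi as [x [H1 H2]]; eauto.
    + intros [x [[i Hi] H2]]; exists i; apply IH; eauto.
Qed.

Lemma occurs_Tm_map (X Y : Type) (f : X -> Y) (t : Tm Sg X) (y : Y) :
  occurs y (Tm_map f t) <-> exists x, occurs x t /\ f x = y.
Proof. unfold Tm_map; rewrite occurs_subst; reflexivity. Qed.

Fixpoint Fin_enum (n : nat) : list (Fin.t n) :=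
  match n with 0 => nil | S m => Fin.F1 :: map Fin.FS (Fin_enum m) end.

Lemma In_Fin_enum n (i : Fin.t n) : In i (Fin_enum n).
Proof. induction i; simpl; auto using in_map. Qed.

Fixpoint vars (X : Type) (t : Tm Sg X) : list X :=
  match t with
  | var x => x :: nil
  | Defs.app o ts => flat_map (fun i => vars X (ts i)) (Fin_enum _)
  end.

Lemma In_vars (X : Type) (t : Tm Sg X) x : In x (vars X t) <-> occurs x t.
Proof.
  induction t as [y|o ts IH]; simpl.
  - split; [intros [->|[]] | intros ->]; auto.
  - rewrite in_flat_map. split.
    + intros [i [_ Hi]]; exists i; apply IH; auto.
    + intros [i Hi]; exists i; split; [apply In_Fin_enum | apply IH; auto].
Qed.

Fixpoint restrict (X : Type) (Q : X -> Prop) (t : Tm Sg X) :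
  (forall x, occurs x t -> Q x) -> Tm Sg {x : X | Q x} :=
  match t return (forall x, occurs x t -> Q x) -> Tm Sg {x : X | Q x} with
  | var y => fun H => var (exist Q y (H y eq_refl))
  | Defs.app o ts =>
      fun H => Defs.app o (fun i => restrict X Q (ts i) (fun x hx => H x (ex_intro _ i hx)))
  end.

Lemma Tm_map_restrict (X : Type) (Q : X -> Prop) (t : Tm Sg X) H :
  Tm_map (fun x : {x | Q x} => proj1_sig x) (restrict X Q t H) = t.
Proof.
  unfold Tm_map in *. induction t as [x|o ts IH]; simpl; auto.
  f_equal; apply functional_extensionality; intro i; apply IH.
Qed.

End Terms.

Arguments vars {Sg X} t.
Arguments restrict {Sg X} Q t _.

Section Congruence.

Variable Th : theory.

Lemma teq_subst (X Y : Type) (h : X -> Tm (sig Th) Y) (t s : Tm (sig Th) X) :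
  teq Th t s -> teq Th (subst h t) (subst h s).
Proof.
  induction 1; simpl.
  - rewrite !subst_subst; apply teq_ax.
  - apply teq_refl.
  - apply teq_sym; auto.
  - eapply teq_trans; eauto.
  - apply teq_cong; auto.
Qed.

Lemma teq_Tm_map (X Y : Type) (f : X -> Y) (t s : Tm (sig Th) X) :
  teq Th t s -> teq Th (Tm_map f t) (Tm_map f s).
Proof. apply teq_subst. Qed.

Lemma teq_Tm_map_reflect (X Y : Type) (g : X -> Y) (t s : Tm (sig Th) X) :
  (forall x x', occurs x t \/ occurs x s -> occurs x' t \/ occurs x' s ->
     g x = g x' -> x = x') ->
  teq Th (Tm_map g t) (Tm_map g s) -> teq Th t s.
Proof.
  intros g_inj E.
  destruct (left_inverse_on _ _ _ _ g var t g_inj) as [h Hh].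
  apply (teq_subst _ _ h) in E. rewrite !subst_Tm_map in E.
  rewrite (subst_ext_on _ _ _ _ var t), (subst_ext_on _ _ _ _ var s), !subst_var in E;
    auto.
Qed.

Hypothesis no_drop : forall e : eqn Th, ~ drop_equation Th e.

Lemma teq_occurs (X : Type) (t s : Tm (sig Th) X) :
  teq Th t s -> forall x, occurs x t <-> occurs x s.
Proof.
  induction 1; intro x; simpl.
  - assert (Hvars := NNPP _ (no_drop e)).
    rewrite !occurs_subst. split; intros [y [H1 H2]]; exists y; split; auto; apply Hvars; auto.
  - reflexivity.
  - rewrite IHteq; reflexivity.
  - rewrite IHteq1; auto.
  - split; intros [i Hi]; exists i; apply H0; auto.
Qed.

End Congruence.

Lemma preserves_monos_all (Th : theory) : preserves_monos Th.
Proof. intros X Y f f_inj t s. apply teq_Tm_map_reflect; auto. Qed.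

Lemma preserves_pullbacks_of_monos_no_drop (Th : theory)
  (no_drop : forall e : eqn Th, ~ drop_equation Th e) :
  preserves_pullbacks_of_monos Th.
Proof.
  intros X Y Z f P pX pZ iZ. split.
  - intros p q E _. apply (teq_Tm_map_reflect _ _ _ pX); auto.
    intros x x' _ _. apply proj1_sig_inj.
  - intros u v E.
    assert (u_in_P : forall x, occurs x u -> Z (f x)).
    { intros x Hx.
      assert (Hfx : occurs (f x) (Tm_map iZ v)).
      { apply (teq_occurs Th no_drop _ _ _ E), occurs_Tm_map; eauto. }
      apply occurs_Tm_map in Hfx as [z [_ <-]]. exact (proj2_sig z). }
    exists (restrict _ u u_in_P). split.
    + unfold pX, P. rewrite Tm_map_restrict. apply teq_refl.
    + apply (teq_Tm_map_reflect _ _ _ iZ).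
      { intros z z' _ _. apply proj1_sig_inj. }
      rewrite <- (Tm_map_restrict _ _ _ u u_in_P), Tm_map_Tm_map in E.
      rewrite Tm_map_Tm_map. exact E.
Qed.

Section Ordinals.

Variables (O : Type) (lt : O -> O -> Prop).

Lemma ole_refl a : ole lt a a.
Proof. right; reflexivity. Qed.

Lemma well_founded_least : well_founded lt ->
  forall (P : O -> Prop) a, P a -> exists c, P c /\ forall d, lt d c -> ~ P d.
Proof.
  intros wf P a Pa. apply NNPP; intro Hn. revert Pa.
  induction (wf a) as [a _ IH]. intro Pa. apply Hn. exists a. split; auto.
Qed.

Hypothesis W : is_well_order lt.

Lemma ole_trans a b c : ole lt a b -> ole lt b c -> ole lt a c.
Proof. destruct W as [_ [tr _]]. intros [H1| ->] [H2| ->]; unfold ole; eauto. Qed.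

Lemma ole_total a b : ole lt a b \/ ole lt b a.
Proof. destruct W as [_ [_ tot]]. destruct (tot a b) as [H|[H|H]]; unfold ole; auto. Qed.

Lemma ole_upper_bound a b : exists c, ole lt a c /\ ole lt b c.
Proof. destruct (ole_total a b); [exists b | exists a]; auto using ole_refl. Qed.

Lemma ole_upper_bound_list (A : Type) (P : A -> O -> Prop) (l : list A) (a0 : O) :
  (forall x a b, ole lt a b -> P x a -> P x b) ->
  (forall x, In x l -> exists a, P x a) ->
  exists a, forall x, In x l -> P x a.
Proof.
  intros P_up P_ex. induction l as [|x l IH]; simpl in *.
  - exists a0; tauto.
  - destruct IH as [a Ha]; auto. destruct (P_ex x) as [b Hb]; auto.
    destruct (ole_upper_bound a b) as [c [hac hbc]].
    exists c. intros y [<-|Hy]; eauto.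
Qed.

(* The points where N jumps form a cofinal set on which N is injective;
   regularity makes that set as large as O, contradicting uncountability. *)
Lemma monotone_nat_stabilizes (reg : is_regular lt) (unc : uncountable O)
  (N : O -> nat) (N_mono : forall a b, ole lt a b -> N a <= N b) :
  exists a0, forall b, ole lt a0 b -> N b <= N a0.
Proof.
  destruct reg as [_ [_ reg]].
  apply NNPP; intro Hn.
  assert (N_unbounded : forall a, exists b, N a < N b).
  { intro a. apply NNPP; intro H. apply Hn. exists a. intros b _.
    apply NNPP; intro H'. apply H. exists b. lia. }
  set (jump := fun c => forall d, lt d c -> N d < N c).
  assert (jump_cofinal : cofinal lt jump).
  { intro a. destruct (N_unbounded a) as [b Hb].
    destruct (well_founded_least (proj1 W) (fun c => N a < N c) b Hb) as [c [Hc Hmin]].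
    exists c. split.
    - intros d Hd. specialize (Hmin d Hd). lia.
    - destruct (ole_total a c) as [H|H]; auto. specialize (N_mono _ _ H). lia. }
  destruct (reg jump jump_cofinal) as [f [_ [f_surj _]]].
  apply unc.
  exists (fun o => N (proj1_sig (proj1_sig (constructive_indefinite_description _ (f_surj o))))).
  intros o1 o2 E.
  destruct (constructive_indefinite_description _ (f_surj o1)) as [[c1 J1] <-].
  destruct (constructive_indefinite_description _ (f_surj o2)) as [[c2 J2] <-].
  simpl in E. f_equal. apply proj1_sig_inj; simpl.
  destruct W as [_ [_ tot]]. destruct (tot c1 c2) as [h|[h|h]]; auto.
  - specialize (J2 _ h). lia.
  - specialize (J1 _ h). lia.
Qed.

End Ordinals.

Arguments ole_trans {O lt} W {a b c}.

Section InverseLimit.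

Variables (O : Type) (lt : O -> O -> Prop) (W : is_well_order lt) (X : O -> Type)
  (r : forall a b, ole lt a b -> X b -> X a).

Lemma lim_ext (x y : lim r) : (forall a, proj1_sig x a = proj1_sig y a) -> x = y.
Proof. intro H. apply proj1_sig_inj, functional_extensionality_dep, H. Qed.

Lemma lim_eq_down (x y : lim r) a b (h : ole lt a b) :
  proj1_sig x b = proj1_sig y b -> proj1_sig x a = proj1_sig y a.
Proof. intro E. rewrite <- (proj2_sig x a b h), <- (proj2_sig y a b h), E. reflexivity. Qed.

Lemma lim_separate_list (a0 : O) (l : list (lim r)) :
  exists a, forall x y, In x l -> In y l -> proj1_sig x a = proj1_sig y a -> x = y.
Proof.
  destruct (ole_upper_bound_list O lt W _
              (fun p a => proj1_sig (fst p) a = proj1_sig (snd p) a -> fst p = snd p)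
              (list_prod l l) a0) as [a Ha].
  - intros p a b h H E. apply H. eapply lim_eq_down; eauto.
  - intros [x y] _. simpl. destruct (classic (x = y)) as [E|E]; [exists a0; auto|].
    apply NNPP; intro H. apply E, lim_ext. intro a.
    apply NNPP; intro H'. apply H. exists a. tauto.
  - exists a. intros x y Hx Hy. apply (Ha (x, y)), in_prod; auto.
Qed.

Hypothesis r_functor : is_op_functor r.

Variables (V : forall a, X a -> Prop) (a0 : O).

Hypothesis V_image :
  forall a b (h : ole lt a b) z, V a z <-> exists y, V b y /\ r a b h y = z.

Hypothesis V_inj : forall c (h : ole lt a0 c) x w,
  V c x -> V c w -> r a0 c h x = r a0 c h w -> x = w.

(* [z] is the [b]-component of a thread through [y]; by [V_inj] there is
   exactly one such thread. *)
Definition lies_over (y : X a0) (b : O) (z : X b) : Prop :=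
  exists c (h1 : ole lt a0 c) (h2 : ole lt b c) w,
    V c w /\ r a0 c h1 w = y /\ r b c h2 w = z.

Lemma lies_over_exists y : V a0 y -> forall b, exists z, lies_over y b z.
Proof.
  intros Hy b. destruct (ole_upper_bound O lt W a0 b) as [c [h1 h2]].
  destruct (proj1 (V_image a0 c h1 y) Hy) as [w [Hw E]].
  exists (r b c h2 w), c, h1, h2, w. auto.
Qed.

Lemma lies_over_V y b z : lies_over y b z -> V b z.
Proof. intros [c [_ [h2 [w [Hw [_ <-]]]]]]. apply (V_image b c h2). eauto. Qed.

Lemma lies_over_restrict y a b (h : ole lt a b) z :
  lies_over y b z -> lies_over y a (r a b h z).
Proof.
  intros [c [h1 [h2 [w [Hw [E1 <-]]]]]].
  exists c, h1, (ole_trans W h h2), w. repeat split; auto.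
  symmetry. apply (proj2 r_functor).
Qed.

Lemma lies_over_unique y b z1 z2 :
  V a0 y -> lies_over y b z1 -> lies_over y b z2 -> z1 = z2.
Proof.
  destruct r_functor as [_ r_comp].
  intros Hy [c1 [h11 [h12 [w1 [Hw1 [E1 <-]]]]]] [c2 [h21 [h22 [w2 [Hw2 [E2 <-]]]]]].
  destruct (ole_upper_bound O lt W c1 c2) as [c [k1 k2]].
  assert (h0 : ole lt a0 c) by exact (ole_trans W h11 k1).
  destruct (proj1 (V_image a0 c h0 y) Hy) as [w [Hw Ew]].
  assert (through_w : forall ci (hi1 : ole lt a0 ci) (hi2 : ole lt b ci) wi
            (ki : ole lt ci c), V ci wi -> r a0 ci hi1 wi = y ->
            r b ci hi2 wi = r b c (ole_trans W hi2 ki) w).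
  { intros ci hi1 hi2 wi ki Hwi Ei.
    assert (E : r ci c ki w = wi).
    { apply (V_inj ci hi1); auto.
      - apply (V_image ci c ki); eauto.
      - rewrite (r_comp _ _ _ _ _ h0). congruence. }
    rewrite <- E. apply r_comp. }
  rewrite (through_w c1 h11 h12 w1 k1), (through_w c2 h21 h22 w2 k2),
    (proof_irrelevance _ (ole_trans W h12 k1) (ole_trans W h22 k2)); auto.
Qed.

Lemma lim_lift :
  exists lift : {y | V a0 y} -> lim r,
    (forall p, proj1_sig (lift p) a0 = proj1_sig p) /\
    (forall p b, V b (proj1_sig (lift p) b)).
Proof.
  set (thread := fun (p : {y | V a0 y}) b =>
         proj1_sig (constructive_indefinite_description _
                      (lies_over_exists (proj1_sig p) (proj2_sig p) b))).
  assert (thread_over : forall p b, lies_over (proj1_sig p) b (thread p b)).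
  { intros p b. exact (proj2_sig (constructive_indefinite_description _ _)). }
  assert (thread_compat : forall p a b (h : ole lt a b), r a b h (thread p b) = thread p a).
  { intros p a b h. apply (lies_over_unique (proj1_sig p) a _ _ (proj2_sig p)); auto.
    apply lies_over_restrict, thread_over. }
  exists (fun p => exist _ (thread p) (thread_compat p)). simpl. split.
  - intro p. apply (lies_over_unique (proj1_sig p) a0 _ _ (proj2_sig p)); auto.
    exists a0, (ole_refl O lt a0), (ole_refl O lt a0), (proj1_sig p).
    rewrite (proj1 r_functor). split; [exact (proj2_sig p) | auto].
  - intros p b. eapply lies_over_V, thread_over.
Qed.

End InverseLimit.

Section TermLimit.

Variables (Th : theory) (O : Type) (lt : O -> O -> Prop) (W : is_well_order lt)
  (X : O -> Type) (r : forall a b, ole lt a b -> X b -> X a).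

Let pi a (x : lim r) : X a := proj1_sig x a.

Lemma Tm_lim_injective (a0 : O) (t s : Tm (sig Th) (lim r)) :
  (forall a, teq Th (Tm_map (pi a) t) (Tm_map (pi a) s)) -> teq Th t s.
Proof.
  intro E. destruct (lim_separate_list O lt W X r a0 (vars t ++ vars s)) as [a Ha].
  apply (teq_Tm_map_reflect _ _ _ (pi a)); auto.
  intros x x' Hx Hx'. apply Ha; apply in_or_app; rewrite !In_vars; tauto.
Qed.

Hypothesis no_drop : forall e : eqn Th, ~ drop_equation Th e.
Hypothesis r_functor : is_op_functor r.
Variable u : forall a, Tm (sig Th) (X a).
Hypothesis u_compat : forall a b (h : ole lt a b), teq Th (Tm_map (r a b h) (u b)) (u a).

Lemma occurs_compat_family a b (h : ole lt a b) z :
  occurs z (u a) <-> exists y, occurs y (u b) /\ r a b h y = z.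
Proof. rewrite <- occurs_Tm_map. symmetry. apply (teq_occurs Th no_drop), u_compat. Qed.

Lemma compat_family_vars_stabilize : is_regular lt -> uncountable O ->
  exists a0, forall c (h : ole lt a0 c) x w,
    occurs x (u c) -> occurs w (u c) -> r a0 c h x = r a0 c h w -> x = w.
Proof.
  intros reg unc.
  set (L := fun a => nodup (fun x y : X a => excluded_middle_informative (x = y)) (vars (u a))).
  assert (In_L : forall a z, In z (L a) <-> occurs z (u a)).
  { intros a z. unfold L. rewrite nodup_In. apply In_vars. }
  assert (L_image : forall a b (h : ole lt a b), incl (L a) (map (r a b h) (L b))).
  { intros a b h z Hz. apply In_L, (occurs_compat_family a b h) in Hz as [y [Hy <-]].
    apply in_map, In_L, Hy. }
  assert (L_mono : forall a b, ole lt a b -> length (L a) <= length (L b)).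
  { intros a b h. rewrite <- (length_map (r a b h)).
    apply NoDup_incl_length; [apply NoDup_nodup | apply L_image]. }
  destruct (monotone_nat_stabilizes O lt W reg unc _ L_mono) as [a0 Ha0].
  exists a0. intros c h x w Hx Hw.
  apply (NoDup_map_injective_on _ _ _ (L c)); try apply In_L; auto.
  apply (NoDup_incl_NoDup (l := L a0)); [apply NoDup_nodup | | apply L_image].
  rewrite length_map. apply Ha0, h.
Qed.

Lemma Tm_lim_surjective : is_regular lt -> uncountable O ->
  exists t : Tm (sig Th) (lim r), forall a, teq Th (Tm_map (pi a) t) (u a).
Proof.
  intros reg unc.
  destruct (compat_family_vars_stabilize reg unc) as [a0 Ha0].
  destruct (lim_lift O lt W X r r_functor (fun a z => occurs z (u a)) a0
              occurs_compat_family Ha0) as [lift [lift_a0 lift_vars]].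
  set (t := Tm_map lift (restrict (fun y => occurs y (u a0)) (u a0) (fun _ H => H))).
  exists t.
  assert (late : forall c (h : ole lt a0 c), teq Th (Tm_map (pi c) t) (u c)).
  { intros c h.
    assert (t_vars : forall x, occurs x (Tm_map (pi c) t) -> occurs x (u c)).
    { intros x Hx. unfold t in Hx. rewrite Tm_map_Tm_map, occurs_Tm_map in Hx.
      destruct Hx as [p [_ <-]]. apply lift_vars. }
    apply (teq_Tm_map_reflect _ _ _ (r a0 c h)).
    { intros x x' Hx Hx'. apply Ha0; intuition. }
    eapply teq_trans; [|apply teq_sym, u_compat].
    replace (Tm_map (r a0 c h) (Tm_map (pi c) t)) with (u a0); [apply teq_refl|].
    unfold t. rewrite !Tm_map_Tm_map. rewrite <- (Tm_map_restrict _ _ _ (u a0) (fun _ H => H)) at 1.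
    f_equal. apply functional_extensionality. intro p.
    unfold pi. rewrite (proj2_sig (lift p)). auto. }
  intro a. destruct (ole_upper_bound O lt W a0 a) as [c [h1 h2]].
  eapply teq_trans; [|apply (u_compat a c h2)].
  replace (Tm_map (pi a) t) with (Tm_map (r a c h2) (Tm_map (pi c) t)).
  - apply teq_Tm_map, late, h1.
  - rewrite Tm_map_Tm_map. f_equal. apply functional_extensionality. intro x.
    apply (proj2_sig x).
Qed.

End TermLimit.

Theorem mainTheorem2 (Th : theory)
  (no_drop : forall e : eqn Th, ~ drop_equation Th e) :
  preserves_pullbacks_of_monos Th /\
  preserves_monos Th /\
  (forall (O : Type) (lt : O -> O -> Prop),
      is_regular lt -> uncountable O ->
      forall (X : O -> Type) (r : forall a b, ole lt a b -> X b -> X a),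
        is_op_functor r -> preserves_limit Th r).
Proof.
  split; [exact (preserves_pullbacks_of_monos_no_drop Th no_drop)|].
  split; [exact (preserves_monos_all Th)|].
  intros O lt reg unc X r r_functor.
  pose proof reg as [W [[[a0 _] _] _]].
  split.
  - exact (Tm_lim_injective Th O lt W X r a0).
  - intros u u_compat.
    exact (Tm_lim_surjective Th O lt W X r no_drop r_functor u u_compat reg unc).
Qed.
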